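(* Let $G$ be a $k\times l$ generator matrix of an $A$-code $C$, and suppose that for each $i$ the $i$-th row $g^{(i)}$ of $G$ is monic. Then $(g^{(1)},\ldots,g^{(k)})$ is a basis of divisors of $C$ if and only if the following three conditions hold: (i) $G$ is in echelon form, i.e. $L_{\mathrm{ind}}(g^{(1)})<L_{\mathrm{ind}}(g^{(2)})<\cdots<L_{\mathrm{ind}}(g^{(k)})$; (ii) $L_{\mathrm{coef}}(g^{(i)})$ divides $f(x)$ in $\mathbb{F}[x]$ for every $i$; (iii) for every $i$, $h_i g^{(i)}$ is an $A$-linear combination of $g^{(i+1)},\ldots,g^{(k)}$, where $h_i(x)=f(x)/L_{\mathrm{coef}}(g^{(i)})$. Moreover, the equivalence remains true if condition (iii) is replaced by (iii$'$) $\dim_{\mathbb{F}} C=\sum_{i=1}^k \bigl(m-\deg L_{\mathrm{coef}}(g^{(i)})\bigr)$.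
   Context: Let $\mathbb{F}$ be a finite field, $f(x)\in\mathbb{F}[x]$ a monic polynomial of degree $m$, and $A=\mathbb{F}[x]/\langle f(x)\rangle$; elements of $A$ are identified with polynomials of degree $<m$, arithmetic done modulo $f$. An $A$-code of length $l$ is an $A$-submodule of $A^l$; it is in particular an $\mathbb{F}$-subspace of $A^l\cong\mathbb{F}^{lm}$, whence $\dim_{\mathbb{F}}$. A generator matrix of an $A$-code is a matrix over $A$ whose rows generate it as an $A$-module. For $u=(u_1,\ldots,u_l)\in A^l$, the leading index $L_{\mathrm{ind}}(u)$ is the smallest $i$ with $u_i\neq 0$ ($L_{\mathrm{ind}}(0)=\infty$) and the leading coefficient is $L_{\mathrm{coef}}(u)=u_{L_{\mathrm{ind}}(u)}$; $u$ is monic if $L_{\mathrm{coef}}(u)$ is a monic polynomial. For a nonzero $A$-code $C$, $L_{\mathrm{ind}}(C)=\min\{L_{\mathrm{ind}}(u):u\in C\}$, and $L_{\mathrm{coef}}(C)$ is the monic polynomial $g$ of minimum degree such that some $c\in C$ has $L_{\mathrm{ind}}(c)=L_{\mathrm{ind}}(C)$ and $L_{\mathrm{coef}}(c)=g$; any such $c$ is a leading element of $C$. Set $C^{(1)}=C$ and, while $C^{(n)}\ne 0$, $C^{(n+1)}=\{c\in C^{(n)}: L_{\mathrm{ind}}(c)>L_{\mathrm{ind}}(C^{(n)})\}$; let $k$ be the largest integer with $C^{(k)}\neq 0$. A tuple $(g^{(1)},\ldots,g^{(k)})$ with $g^{(j)}$ a leading element of $C^{(j)}$ for each $j$ is called a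 basis of divisors of $C$. *)

From HB Require Import structures.
From mathcomp Require Import all_boot all_order all_algebra.
Set Implicit Arguments. Unset Strict Implicit. Unset Printing Implicit Defensive.
Import GRing.Theory.
Local Open Scope ring_scope.

(* Elements of A = F[x]/<f> are polynomials of size < size f (degree < m,
   where m = (size f).-1 = deg f); vectors of A^l are row vectors
   'rV[{poly F}]_l whose entries are all reduced. *)

Section Codes.
Variable F : finFieldType.
Variable l : nat.

Definition vec := 'rV[{poly F}]_l.

Definition reduced (f : {poly F}) (u : vec) : Prop :=
  forall j : 'I_l, (size (u ord0 j) < size f)%N.

Definition modrow (f : {poly F}) (u : vec) : vec := map_mx (fun p => p %% f) u.

Definition isACode (f : {poly F}) (C : vec -> Prop) : Prop :=
  [/\ forall u, C u -> reduced f u,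
      C 0,
      forall u v, C u -> C v -> C (u + v)
    & forall (a : {poly F}) u, (size a < size f)%N -> C u -> C (modrow f (a *: u))].

Definition isGenMatrix (f : {poly F}) (k : nat) (G : 'M[{poly F}]_(k, l))
  (C : vec -> Prop) : Prop :=
  (forall i : 'I_k, reduced f (row i G)) /\
  (forall u, C u <-> exists a : 'I_k -> {poly F},
       (forall i, (size (a i) < size f)%N) /\
       u = modrow f (\sum_(i < k) a i *: row i G)).

(* leading index (0-based); the value l plays the role of infinity *)
Definition lind (u : vec) : nat := find (fun j : 'I_l => u ord0 j != 0) (enum 'I_l).

(* leading coefficient (0 for the zero vector) *)
Definition lcoef (u : vec) : {poly F} :=
  nth 0 [seq u ord0 j | j <- enum 'I_l] (lind u).

Definition monicv (u : vec) : Prop := lcoef u \is monic.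

Definition leadingElement (C : vec -> Prop) (c : vec) : Prop :=
  [/\ C c,
      forall u, C u -> (lind c <= lind u)%N,
      lcoef c \is monic
    & forall u, C u -> lind u = lind c -> lcoef u \is monic ->
        (size (lcoef c) <= size (lcoef u))%N].

(* chain C n = C^{(n+1)} :  C^{(1)} = C,
   C^{(n+1)} = { c in C^{(n)} | L_ind(c) > L_ind(C^{(n)}) } *)
Fixpoint chain (C : vec -> Prop) (n : nat) : vec -> Prop :=
  match n with
  | 0 => C
  | n'.+1 => fun c => chain C n' c /\ exists d, chain C n' d /\ d != 0 /\ (lind d < lind c)%N
  end.

(* (g 0, ..., g (k-1)) is a basis of divisors of C: g j is a leading element
   of C^{(j+1)}, and k is the largest integer with C^{(k)} <> 0, i.e.
   C^{(k+1)} = 0. *)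
Definition basisOfDivisors (C : vec -> Prop) (k : nat) (g : 'I_k -> vec) : Prop :=
  (forall j : 'I_k, leadingElement (chain C j) (g j)) /\
  (forall c, chain C k c -> c = 0).

Definition dimF (C : vec -> Prop) (n : nat) : Prop :=
  exists s : 'I_n -> vec,
    [/\ forall i, C (s i),
        forall c : 'I_n -> F, \sum_(i < n) (c i)%:P *: s i = 0 -> forall i, c i = 0
      & forall u, C u -> exists c : 'I_n -> F, u = \sum_(i < n) (c i)%:P *: s i].

End Codes.

From mathcomp Require Import all_boot all_order all_algebra ring zify.
Set Implicit Arguments. Unset Strict Implicit. Unset Printing Implicit Defensive.
Import GRing.Theory.
Local Open Scope ring_scope.

(* If the rows of G are in echelon form with monic pivots g_i = L_coef(g^(i)), a combination
   sum_i b_i g^(i) with deg(b_i g_i) < m for all i has leading index L_ind(g^(j)) and leading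
   coefficient b_j g_j, where j is the first index with b_j <> 0.  So once every codeword has
   such a reduced representation, C^(j) consists exactly of the reduced combinations of rows
   j, j+1, ..., and the rows form a basis of divisors.  Conditions (ii) and (iii) produce
   reduced representations by dividing each b_i by h_i = f/g_i and pushing the quotient onto
   later rows; condition (iii') produces them by counting, since the reduced combinations
   already form an F-space of dimension sum_i (m - deg g_i) inside C.
   Conversely, minimality of g_j forces g_j to divide the pivot entry of every element of
   C^(j).  Applied to (-f/g_j) g^(j) this gives (ii); peeling off pivots row by row writes
   every element of C^(j) in terms of the rows j, j+1, ..., which applied to h_j g^(j)
   gives (iii), and (iii') follows from (ii) and (iii). *)

Section LeadingIndex.
Variables (F : finFieldType) (l : nat).
Implicit Types (u v : vec F l) (f a : {poly F}).

Lemma lind_le u : (lind u <= l)%N.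
Proof. by have := find_size (fun j : 'I_l => u ord0 j != 0) (enum 'I_l); rewrite size_enum_ord. Qed.

Lemma lind_entry_neq0 u (j : 'I_l) : lind u = j -> u ord0 j != 0.
Proof.
move=> lind_u; have has_nz : has (fun j : 'I_l => u ord0 j != 0) (enum 'I_l).
  by rewrite has_find size_enum_ord -/(lind u) lind_u.
by have := nth_find j has_nz; rewrite -/(lind u) lind_u nth_ord_enum.
Qed.

Lemma entry_before_lind u (j : 'I_l) : (j < lind u)%N -> u ord0 j = 0.
Proof. by move=> lt_j; have := before_find j lt_j; rewrite nth_ord_enum => /negbFE/eqP. Qed.

Lemma lind_geP u (p : nat) : (p <= l)%N ->
  (p <= lind u)%N <-> (forall j : 'I_l, (j < p)%N -> u ord0 j = 0).
Proof.
move=> pl; split=> [le_p j lt_j | zero_before].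
  exact/entry_before_lind/(leq_trans lt_j).
rewrite leqNgt; apply/negP => lt_p.
have lt_l : (lind u < l)%N by apply: leq_trans lt_p pl.
by have /eqP[] := lind_entry_neq0 (j := Ordinal lt_l) erefl; apply: zero_before.
Qed.

Lemma lcoef_lind u (j : 'I_l) : lind u = j -> lcoef u = u ord0 j.
Proof. by move=> lind_u; rewrite /lcoef lind_u (nth_map j) ?size_enum_ord // nth_ord_enum. Qed.

Lemma lind_first_neq0 u (j : 'I_l) : (forall t : 'I_l, (t < j)%N -> u ord0 t = 0) ->
  u ord0 j != 0 -> lind u = j.
Proof.
move=> zero_before nz; apply/eqP; rewrite eqn_leq (proj2 (lind_geP u (ltnW (ltn_ord j)))) //.
rewrite andbT leqNgt; apply: contra nz => lt_j.
exact/eqP/entry_before_lind.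
Qed.

Lemma lind0 : lind (0 : vec F l) = l.
Proof.
by apply/eqP; rewrite eqn_leq lind_le; apply/(lind_geP _ (leqnn l)) => j _; rewrite mxE.
Qed.

Lemma lind_lt u : u != 0 -> (lind u < l)%N.
Proof.
apply: contraNT; rewrite -leqNgt => le_l; apply/eqP/matrixP => i j.
by rewrite (ord1 i) mxE entry_before_lind // (leq_trans (ltn_ord j)).
Qed.

Lemma lcoef_eq0 u : (lcoef u == 0) = (u == 0).
Proof.
have [->|nz] := eqVneq u 0.
  by rewrite /lcoef lind0 nth_default ?eqxx // size_map size_enum_ord.
by rewrite (lcoef_lind (j := Ordinal (lind_lt nz))) // (negPf (lind_entry_neq0 _)).
Qed.

Lemma lind_add u v : (minn (lind u) (lind v) <= lind (u + v)%R)%N.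
Proof.
have le_l : (minn (lind u) (lind v) <= l)%N by rewrite geq_min lind_le.
apply/(lind_geP _ le_l) => j; rewrite leq_min => /andP[ju jv].
by rewrite mxE !entry_before_lind ?addr0.
Qed.

Lemma modrow0 f : modrow f (0 : vec F l) = 0.
Proof. by apply/matrixP => i j; rewrite !mxE mod0p. Qed.

Lemma modrowD f u v : modrow f (u + v) = modrow f u + modrow f v.
Proof. by apply/matrixP => i j; rewrite !mxE modpD. Qed.

Lemma modrowN f u : modrow f (- u) = - modrow f u.
Proof. by apply/matrixP => i j; rewrite !mxE modpN. Qed.

Lemma modrowB f u v : modrow f (u - v) = modrow f u - modrow f v.
Proof. by rewrite modrowD modrowN. Qed.

Lemma modrow_sum f (I : finType) (P : pred I) (X : I -> vec F l) :
  modrow f (\sum_(i | P i) X i) = \sum_(i | P i) modrow f (X i).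
Proof. exact: (big_morph _ (modrowD f) (modrow0 f)). Qed.

Lemma modrowZ_modrow f a u : modrow f (a *: modrow f u) = modrow f (a *: u).
Proof. by apply/matrixP => i j; rewrite !mxE modp_mul. Qed.

Lemma modrowZ_modp f a u : modrow f ((a %% f) *: u) = modrow f (a *: u).
Proof. by apply/matrixP => i j; rewrite !mxE mulrC modp_mul mulrC. Qed.

Lemma modrowZC f (c : F) u : modrow f (c%:P *: u) = c%:P *: modrow f u.
Proof. by apply/matrixP => i j; rewrite !mxE !mul_polyC modpZl. Qed.

Lemma modrow_id f u : reduced f u -> modrow f u = u.
Proof. by move=> red_u; apply/matrixP => i j; rewrite (ord1 i) mxE modp_small. Qed.

Lemma lind_modrowZ f a u : (lind u <= lind (modrow f (a *: u)))%N.
Proof.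
apply/(lind_geP _ (lind_le u)) => j ju.
by rewrite !mxE entry_before_lind ?mulr0 ?mod0p.
Qed.

End LeadingIndex.

Section Code.
Variables (F : finFieldType) (f : {poly F}) (l k : nat) (C : vec F l -> Prop)
  (G : 'M[{poly F}]_(k, l)).
Hypotheses (f_monic : f \is monic) (C_code : isACode f C) (G_gen : isGenMatrix f G C)
  (row_monic : forall i : 'I_k, monicv (row i G)).

Local Notation r i := (row i G).
Local Notation p i := (lind (row i G)).
Local Notation g i := (lcoef (row i G)).
Implicit Types (i : 'I_k) (b : 'I_k -> {poly F}) (u w c : vec F l).

Lemma f_neq0 : f != 0. Proof. exact: monic_neq0. Qed.

Lemma lcoef_row_neq0 i : g i != 0. Proof. exact: monic_neq0 (row_monic i). Qed.

Lemma row_neq0 i : r i != 0. Proof. by rewrite -lcoef_eq0 lcoef_row_neq0. Qed.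

Lemma row_reduced i : reduced f (r i). Proof. exact: G_gen.1. Qed.

Lemma lind_row_lt i : (p i < l)%N. Proof. exact/lind_lt/row_neq0. Qed.

Definition pivot i : 'I_l := Ordinal (lind_row_lt i).

Lemma row_pivot i : G i (pivot i) = g i.
Proof. by rewrite (@lcoef_lind _ _ _ (pivot i)) // mxE. Qed.

Lemma row_before_pivot i (t : 'I_l) : (t < pivot i)%N -> G i t = 0.
Proof. by move=> lt_t; have := @entry_before_lind _ _ (r i) t lt_t; rewrite mxE. Qed.

Lemma size_lcoef_row i : (size (g i) < size f)%N.
Proof. by rewrite -row_pivot; have := row_reduced i (pivot i); rewrite mxE. Qed.

Lemma size_f_gt1 i : (1 < size f)%N.
Proof. by apply: leq_trans (size_lcoef_row i); rewrite ltnS size_poly_gt0 lcoef_row_neq0. Qed.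

Lemma size_f_gt0 : (0 < size f)%N.
Proof. by rewrite size_poly_gt0 f_neq0. Qed.

Lemma size_le_mul_lcoef_row (a : {poly F}) i : (size a <= size (a * g i)%R)%N.
Proof.
have [->|a_neq0] := eqVneq a 0; first by rewrite mul0r.
rewrite size_Mmonic //; last exact: row_monic.
have := size_poly_gt0 (g i); rewrite lcoef_row_neq0; lia.
Qed.

Lemma chain_code j c : chain C j c -> C c.
Proof. by elim: j c => [//|j IH] c /= [/IH]. Qed.

Lemma chain_le j j' c : (j <= j')%N -> chain C j' c -> chain C j c.
Proof.
elim: j' c => [|j' IH] c; first by rewrite leqn0 => /eqP ->.
by rewrite leq_eqVlt => /orP[/eqP -> //|le_j] /= [c_j _]; apply: IH.
Qed.

Lemma chainD j u w : chain C j u -> chain C j w -> chain C j (u + w).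
Proof.
elim: j u w => [|j IH] u w /=; first by case: C_code => _ _ addC _; apply: addC.
move=> [u_j [d1 [d1_j [nz1 lt1]]]] [w_j [d2 [d2_j [nz2 lt2]]]]; split; first exact: IH.
have le_add := lind_add u w.
have [le12|lt21] := leqP (lind d1) (lind d2).
- exists d1; do 2!split => //; apply: leq_trans _ le_add.
  by rewrite leq_min lt1 (leq_ltn_trans le12 lt2).
- exists d2; do 2!split => //; apply: leq_trans _ le_add.
  by rewrite leq_min lt2 (ltn_trans lt21 lt1).
Qed.

Lemma chainZ j (a : {poly F}) u : (size a < size f)%N -> chain C j u ->
  chain C j (modrow f (a *: u)).
Proof.
move=> size_a; elim: j u => [|j IH] u /=; first by case: C_code => _ _ _ scaleC; apply: scaleC.
move=> [u_j [d [d_j [d_neq0 lt_d]]]]; split; first exact: IH.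
by exists d; do 2!split => //; apply: leq_trans lt_d (lind_modrowZ _ _ _).
Qed.

Definition rowcomb b : vec F l := modrow f (\sum_i b i *: r i).

Definition small_coefs b := forall i, (size (b i * g i)%R < size f)%N.

Definition reduced_rep (j : nat) c := exists b,
  [/\ small_coefs b, forall i : 'I_k, (i < j)%N -> b i = 0 & c = rowcomb b].

Definition reduced_spanning := forall c, C c -> reduced_rep 0 c.

Lemma reduced_rep_code c : reduced_rep 0 c -> C c.
Proof.
case=> b [small_b _ ->]; apply/G_gen.2; exists b; split => // i.
exact: leq_ltn_trans (size_le_mul_lcoef_row _ _) (small_b i).
Qed.

Lemma reduced_rep_row i : reduced_rep i (r i).
Proof.
exists (fun j => (j == i)%:R); split.
- by move=> j; case: eqP => _; rewrite ?mul1r ?mul0r ?size_lcoef_row ?size_poly0 ?size_f_gt0.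
- by move=> j; case: eqP => [->|_]; rewrite ?ltnn.
- rewrite /rowcomb (bigD1 i) //= eqxx scale1r big1 ?addr0 ?modrow_id //; first exact: row_reduced.
  by move=> j /negPf ->; rewrite scale0r.
Qed.

Lemma code_row i : C (r i).
Proof. by have [b [small_b _ ->]] := reduced_rep_row i; apply: reduced_rep_code; exists b. Qed.

Section Echelon.
Hypothesis echelon : forall i j : 'I_k, (i < j)%N -> (p i < p j)%N.

Lemma lind_row_le i (j : 'I_k) : (i <= j)%N -> (p i <= p j)%N.
Proof. by rewrite leq_eqVlt => /orP[/eqP/val_inj -> //|/echelon/ltnW]. Qed.

Lemma rowcomb_before b (j : 'I_k) : (forall i : 'I_k, (i < j)%N -> b i = 0) ->
  forall t : 'I_l, (t < pivot j)%N -> rowcomb b ord0 t = 0.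
Proof.
move=> zero_b t lt_t; rewrite !mxE summxE big1 ?mod0p // => i _; rewrite !mxE.
have [lt_ij|le_ji] := ltnP i j; first by rewrite zero_b ?mul0r.
by rewrite row_before_pivot ?mulr0 // (leq_trans lt_t) ?lind_row_le.
Qed.

Lemma rowcomb_pivot b (j : 'I_k) : (forall i : 'I_k, (i < j)%N -> b i = 0) ->
  rowcomb b ord0 (pivot j) = (b j * g j) %% f.
Proof.
move=> zero_b; rewrite !mxE summxE (bigD1 j) //= big1 ?addr0 ?mxE ?row_pivot //.
move=> i neq_ij; rewrite !mxE; have [lt_ij|lt_ji|/val_inj eq_ij] := ltngtP i j.
- by rewrite zero_b ?mul0r.
- by rewrite row_before_pivot ?mulr0 //= echelon.
- by rewrite eq_ij eqxx in neq_ij.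
Qed.

Lemma lind_rowcomb_ge b (j : 'I_k) : (forall i : 'I_k, (i < j)%N -> b i = 0) ->
  (p j <= lind (rowcomb b))%N.
Proof. by move=> zero_b; apply/(lind_geP _ (ltnW (lind_row_lt j)))/rowcomb_before. Qed.

Lemma lind_rowcomb_gt b (j : 'I_k) : small_coefs b ->
  (forall i : 'I_k, (i < j)%N -> b i = 0) -> (p j < lind (rowcomb b))%N = (b j == 0).
Proof.
move=> small_b zero_b; apply/idP/eqP => [lt_p | b_j0].
  have := @entry_before_lind _ _ _ (pivot j) lt_p.
  rewrite rowcomb_pivot // modp_small // => /eqP.
  by rewrite mulf_eq0 (negPf (lcoef_row_neq0 j)) orbF => /eqP.
apply/(lind_geP _ (lind_row_lt j)) => t.
rewrite ltnS leq_eqVlt => /orP[/eqP t_p|]; last exact: rowcomb_before.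
have -> : t = pivot j by apply: val_inj.
by rewrite rowcomb_pivot // b_j0 mul0r mod0p.
Qed.

Lemma rowcomb_eq0 b : small_coefs b -> rowcomb b = 0 -> forall i, b i = 0.
Proof.
move=> small_b comb0.
suff zero_before (j : nat) : forall i : 'I_k, (i < j)%N -> b i = 0.
  by move=> i; apply: (zero_before i.+1).
elim: j => [//|j IH] i; rewrite ltnS leq_eqVlt => /orP[/eqP i_j|]; last exact: IH.
apply/eqP; rewrite -(lind_rowcomb_gt small_b) ?comb0 ?lind0 ?lind_row_lt //.
by move=> i' lt_i'; apply: IH; rewrite -i_j.
Qed.

Lemma chain_reduced_rep : reduced_spanning -> forall j, (j <= k)%N ->
  forall c, chain C j c <-> reduced_rep j c.
Proof.
move=> spanning; elim=> [_ c|j IH lt_jk c] /=.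
  by split=> [/spanning | /reduced_rep_code].
pose J : 'I_k := Ordinal lt_jk; have le_jk := ltnW lt_jk.
split=> [[c_j [d [d_j [_ lt_d]]]] | [b [small_b zero_b ->]]].
- have [b [small_b zero_b ec]] := (IH le_jk c).1 c_j.
  have [b' [_ zero_b' ed]] := (IH le_jk d).1 d_j.
  have le_d : (p J <= lind d)%N by rewrite ed lind_rowcomb_ge.
  have /eqP b_J0 : b J == 0.
    by rewrite -(lind_rowcomb_gt (j := J) small_b zero_b) -ec (leq_ltn_trans le_d lt_d).
  exists b; split => // i; rewrite ltnS leq_eqVlt => /orP[/eqP i_j|]; last exact: zero_b.
  by have -> : i = J by apply: val_inj.
- have zero_bj : forall i : 'I_k, (i < j)%N -> b i = 0 by move=> i /leqW/zero_b.
  split; first by apply/(IH le_jk); exists b.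
  exists (r J); split; first exact/(IH le_jk)/(reduced_rep_row J).
  split; first exact: row_neq0.
  by rewrite (lind_rowcomb_gt (j := J) small_b zero_bj) zero_b.
Qed.

Lemma basis_of_reduced_spanning : reduced_spanning -> basisOfDivisors C (fun i => r i).
Proof.
move=> spanning; have chainE := chain_reduced_rep spanning.
split=> [j | c /(chainE _ (leqnn k)) [b [_ zero_b ->]]]; last first.
  by rewrite /rowcomb big1 ?modrow0 // => i _; rewrite zero_b ?scale0r.
have le_jk := ltnW (ltn_ord j).
split; [exact/(chainE _ le_jk)/reduced_rep_row | | exact: row_monic | ].
- by move=> u /(chainE _ le_jk) [b [_ zero_b ->]]; apply: lind_rowcomb_ge.
- move=> u /(chainE _ le_jk) [b [small_b zero_b ->]] lind_u monic_u.
  have lcoef_u : lcoef (rowcomb b) = b j * g j.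
    by rewrite (lcoef_lind (j := pivot j) lind_u) rowcomb_pivot // modp_small.
  have b_j_neq0 : b j != 0.
    by move: (monic_neq0 monic_u); rewrite lcoef_u mulf_eq0 negb_or => /andP[].
  rewrite lcoef_u size_Mmonic //; last exact: row_monic.
  by have := size_poly_gt0 (b j); rewrite b_j_neq0; lia.
Qed.

Definition row_dim i := ((size f).-1 - (size (g i)).-1)%N.

Local Notation n := (\sum_(i < k) row_dim i)%N.
Local Notation rank := (@tagnat.Rank k row_dim).
Local Notation sig1 := (@tagnat.sig1 k row_dim).
Local Notation sig2 := (@tagnat.sig2 k row_dim).

Lemma size_mul_lcoef_row_lt (a : {poly F}) i :
  (size (a * g i)%R < size f)%N = (size a <= row_dim i)%N.
Proof.
rewrite /row_dim; have := size_lcoef_row i; have := size_poly_gt0 (g i).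
rewrite lcoef_row_neq0; have [->|a_neq0] := eqVneq a 0; first by rewrite mul0r size_poly0; lia.
rewrite size_Mmonic //; last exact: row_monic.
by have := size_poly_gt0 a; rewrite a_neq0; lia.
Qed.

Definition monomial_row (s : 'I_n) : vec F l := modrow f ('X^(sig2 s) *: r (sig1 s)).

Definition coefs_of (y : 'I_n -> F) i : {poly F} :=
  \sum_(t < row_dim i) y (rank i t) *: 'X^t.

Lemma sig2_rank i (t : 'I_(row_dim i)) : sig2 (rank i t) = t :> nat.
Proof. by rewrite tagnat.Rank2K. Qed.

Lemma big_tagnat (V : zmodType) (X : 'I_n -> V) :
  \sum_(s < n) X s = \sum_i \sum_(t < row_dim i) X (rank i t).
Proof.
rewrite sig_big_dep /= (reindex (@tagnat.sig k row_dim)) /=; last exact: tagnat.sig_bij_on.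
by apply: eq_bigr => s _; rewrite -tagnat.rankE tagnat.sigK.
Qed.

Lemma sum_monomial_row (y : 'I_n -> F) :
  \sum_(s < n) (y s)%:P *: monomial_row s = rowcomb (coefs_of y).
Proof.
rewrite big_tagnat /rowcomb modrow_sum; apply: eq_bigr => i _.
rewrite /coefs_of scaler_suml modrow_sum; apply: eq_bigr => t _.
by rewrite /monomial_row sig2_rank tagnat.Rank1K -modrowZC scalerA mul_polyC.
Qed.

Lemma coef_coefs_of (y : 'I_n -> F) i (t : 'I_(row_dim i)) :
  (coefs_of y i)`_t = y (rank i t).
Proof.
rewrite /coefs_of coef_sum (bigD1 t) //= coefZ coefXn eqxx mulr1 big1 ?addr0 // => t' neq_t.
by rewrite coefZ coefXn eq_sym (inj_eq val_inj) (negPf neq_t) mulr0.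
Qed.

Lemma small_coefs_of (y : 'I_n -> F) : small_coefs (coefs_of y).
Proof.
move=> i; rewrite size_mul_lcoef_row_lt; apply: leq_trans (size_sum _ _ _) _.
apply/bigmax_leqP => t _; apply: leq_trans (size_scale_leq _ _) _.
by rewrite size_polyXn ltn_ord.
Qed.

Lemma code_monomial_row s : C (monomial_row s).
Proof.
rewrite /monomial_row -modrowZ_modp; case: C_code => _ _ _ scaleC.
by apply: scaleC; [rewrite ltn_modp f_neq0 | exact: code_row].
Qed.

Lemma monomial_row_free (y : 'I_n -> F) :
  \sum_(s < n) (y s)%:P *: monomial_row s = 0 -> forall s, y s = 0.
Proof.
rewrite sum_monomial_row => /(rowcomb_eq0 (small_coefs_of y)) coefs0 s.
have := congr1 (fun q : {poly F} => q`_(sig2 s)) (coefs0 (sig1 s)).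
by rewrite coef_coefs_of coef0 tagnat.sig2K.
Qed.

Lemma reduced_rep_rowcomb (y : 'I_n -> F) : reduced_rep 0 (rowcomb (coefs_of y)).
Proof. by exists (coefs_of y); split => //; exact: small_coefs_of. Qed.

Lemma reduced_rep_monomial_rows c : reduced_rep 0 c ->
  exists y : 'I_n -> F, c = \sum_(s < n) (y s)%:P *: monomial_row s.
Proof.
case=> b [small_b _ ->]; exists (fun s => (b (sig1 s))`_(sig2 s)).
rewrite sum_monomial_row /rowcomb; congr modrow; apply: eq_bigr => i _; congr (_ *: _).
have size_b : (size (b i) <= row_dim i)%N by rewrite -size_mul_lcoef_row_lt.
transitivity (\sum_(t < row_dim i) (b i)`_t *: 'X^t).
  rewrite -poly_def; apply/polyP => t; rewrite coef_poly; case: ltnP => // le_t.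
  by rewrite nth_default // (leq_trans size_b).
apply: eq_bigr => t _; congr (_ *: _).
by rewrite sig2_rank tagnat.Rank1K.
Qed.

Lemma dimF_of_reduced_spanning : reduced_spanning -> dimF C n.
Proof.
move=> spanning; exists monomial_row; split; [exact: code_monomial_row | | ].
  exact: monomial_row_free.
by move=> u /spanning /reduced_rep_monomial_rows.
Qed.

Lemma reduced_spanning_of_dimF : dimF C n -> reduced_spanning.
Proof.
move=> [s [_ _ s_span]] c c_C.
pose phi (z : {ffun 'I_n -> F}) := \sum_(i < n) (z i)%:P *: s i.
pose psi (y : {ffun 'I_n -> F}) := \sum_(t < n) (y t)%:P *: monomial_row t.
have phi_onto u : C u -> exists z, phi z = u.
  by case/s_span => z ->; exists (finfun z); apply: eq_bigr => i _; rewrite ffunE.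
have psi_inj : injective psi.
  move=> y1 y2 /eqP; rewrite -subr_eq0 -sumrB => /eqP sum0; apply/ffunP => t.
  apply/eqP; rewrite -subr_eq0; apply/eqP; move: t; apply: monomial_row_free.
  by rewrite -{}[RHS]sum0; apply: eq_bigr => t _; rewrite polyCB scalerBl.
have psi_C y : C (psi y).
  by rewrite /psi sum_monomial_row; exact/reduced_rep_code/reduced_rep_rowcomb.
pose h y := odflt y [pick z | phi z == psi y].
have phi_h y : phi (h y) = psi y.
  rewrite /h; case: pickP => [z /eqP // | no_z].
  by have [z /eqP] := phi_onto _ (psi_C y); rewrite no_z.
have [h' _ h'K] : bijective h.
  by apply: injF_bij => y1 y2 eq_h; apply: psi_inj; rewrite -!phi_h eq_h.
have [z <-] := phi_onto _ c_C.
by rewrite -(h'K z) phi_h /psi sum_monomial_row; apply: reduced_rep_rowcomb.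
Qed.

End Echelon.

Section Divisors.
Hypothesis lcoef_dvd : forall i, g i %| f.
Hypothesis tail_comb : forall i, exists a : 'I_k -> {poly F},
  (forall j, (size (a j) < size f)%N) /\
  modrow f ((f %/ g i) *: r i) = modrow f (\sum_(j < k | (i < j)%N) a j *: r j).

Lemma size_modp_quot_mul_lcoef (a : {poly F}) i :
  (size ((a %% (f %/ g i)) * g i)%R < size f)%N.
Proof.
have f_eq : f %/ g i * g i = f by rewrite divpK.
have quot_neq0 : f %/ g i != 0 by apply: contraNneq f_neq0 => q0; rewrite -f_eq q0 mul0r.
have [->|rem_neq0] := eqVneq (a %% (f %/ g i)) 0; first by rewrite mul0r size_poly0 size_f_gt0.
rewrite -{2}f_eq !size_Mmonic //; try exact: row_monic.
have := ltn_modp a (f %/ g i); rewrite quot_neq0 => /= lt_size.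
have := size_poly_gt0 (g i); rewrite lcoef_row_neq0.
by move: (size _) (size _) (size (g i)) lt_size => x y z; lia.
Qed.

Lemma rowcomb_reduce_at b (J : 'I_k) : exists b',
  [/\ (size (b' J * g J)%R < size f)%N, forall i : 'I_k, (i < J)%N -> b' i = b i
    & rowcomb b' = rowcomb b].
Proof.
pose h := f %/ g J; pose q := b J %/ h.
have [a [_ a_tail]] := tail_comb J.
exists (fun i => if i == J then b J %% h else if (J < i)%N then b i + q * a i else b i).
split=> [|i lt_iJ|]; first by rewrite eqxx; apply: size_modp_quot_mul_lcoef.
  by rewrite -val_eqE (ltn_eqF lt_iJ) ltnNge (ltnW lt_iJ).
apply/eqP; rewrite -subr_eq0 /rowcomb -modrowB -sumrB.
set S := \sum_i _.
have -> : S = - (q *: (h *: r J - \sum_(t < k | (J < t)%N) a t *: r t)).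
  rewrite /S (bigD1 J) //= eqxx -scalerBl.
  have -> : b J %% h - b J = - (q * h) by rewrite {2}(divp_eq (b J) h) /q; ring.
  rewrite scalerBr opprB scalerA scaleNr addrC; congr (_ + _).
  rewrite scaler_sumr [RHS]big_mkcond [LHS]big_mkcond; apply: eq_bigr => t _ /=.
  have [->|neq_tJ] := eqVneq t J; first by rewrite ltnn.
  by case: ifP => _; rewrite /= ?subrr // scalerDl addrAC subrr add0r scalerA.
by rewrite modrowN -modrowZ_modrow modrowB a_tail subrr scaler0 modrow0 oppr0.
Qed.

Lemma reduced_spanning_of_divisors : reduced_spanning.
Proof.
move=> c c_C.
suff /(_ k (leqnn k)) [b [small_b ->]] : forall j, (j <= k)%N -> exists b,
    (forall i : 'I_k, (i < j)%N -> (size (b i * g i)%R < size f)%N) /\ c = rowcomb b.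
  by exists b; split => // i; apply: small_b.
elim=> [_|j IH lt_jk]; first by have [a [_ ->]] := (G_gen.2 c).1 c_C; exists a.
have [b [small_b ->]] := IH (ltnW lt_jk).
have [b' [small_J b'_eq <-]] := rowcomb_reduce_at b (Ordinal lt_jk).
exists b'; split => // i; rewrite ltnS leq_eqVlt => /orP[/eqP i_j|lt_ij].
  by have -> : i = Ordinal lt_jk by apply: val_inj.
by rewrite b'_eq // small_b.
Qed.

End Divisors.

Lemma modrowZ_row_pivot (a : {poly F}) i : modrow f (a *: r i) ord0 (pivot i) = (a * g i) %% f.
Proof. by rewrite !mxE row_pivot. Qed.

Section Basis.
Hypothesis basis : basisOfDivisors C (fun i => r i).

Lemma leading_row i : leadingElement (chain C i) (r i).
Proof. exact: basis.1. Qed.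

Lemma chain_row i : chain C i (r i).
Proof. by have [] := leading_row i. Qed.

Lemma echelon_of_basis i (j : 'I_k) : (i < j)%N -> (p i < p j)%N.
Proof.
move=> lt_ij; have /= [_ [d [d_i [_ lt_d]]]] := chain_le lt_ij (chain_row j).
have [_ min_i _ _] := leading_row i.
exact: leq_ltn_trans (min_i d d_i) lt_d.
Qed.

Lemma chain_before_pivot i c : chain C i c ->
  forall t : 'I_l, (t < pivot i)%N -> c ord0 t = 0.
Proof.
move=> c_i t lt_t; have [_ min_i _ _] := leading_row i.
exact/entry_before_lind/(leq_trans lt_t)/min_i.
Qed.

Lemma chainS_of_pivot_eq0 i c : chain C i c -> c ord0 (pivot i) = 0 -> chain C i.+1 c.
Proof.
move=> c_i c_pivot; split => //; exists (r i); split; first exact: chain_row.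
split; first exact: row_neq0.
apply/(lind_geP _ (lind_row_lt i)) => t.
rewrite ltnS leq_eqVlt => /orP[/eqP t_p|]; last exact: chain_before_pivot.
by have -> : t = pivot i by apply: val_inj.
Qed.

(* If [g i] left a nonzero remainder on the pivot entry, subtracting the matching multiple
   of [r i] and normalising would give an element of the chain whose monic leading
   coefficient has smaller degree than [g i]. *)
Lemma lcoef_row_dvd_pivot i c : chain C i c -> g i %| c ord0 (pivot i).
Proof.
move=> c_i; have [_ _ _ min_size] := leading_row i.
set e := c ord0 (pivot i); pose q := e %/ g i; pose rho := e %% g i.
apply/modp_eq0P/eqP; apply: contraT => rho_neq0.
pose gam := (lead_coef rho)^-1.
pose w := modrow f (gam%:P *: c) + modrow f ((- (gam%:P * q)) %% f *: r i).
have w_i : chain C i w.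
  apply: chainD; last by apply: chainZ (chain_row i); rewrite ltn_modp f_neq0.
  exact: chainZ (leq_ltn_trans (size_polyC_leq1 _) (size_f_gt1 i)) c_i.
have w_before : forall t : 'I_l, (t < pivot i)%N -> w ord0 t = 0.
  move=> t lt_t; rewrite !mxE (chain_before_pivot c_i) // row_before_pivot //.
  by rewrite !mulr0 mod0p addr0.
have size_rho : (size (gam%:P * rho)%R < size (g i))%N.
  by rewrite mul_polyC (leq_ltn_trans (size_scale_leq _ _)) // ltn_modp lcoef_row_neq0.
have w_pivot : w ord0 (pivot i) = gam%:P * rho.
  rewrite mxE modrowZ_row_pivot !mxE -/e [_ * g i]mulrC modp_mul -modpD.
  have -> : gam%:P * e + g i * - (gam%:P * q) = gam%:P * rho.
    by rewrite {1}(divp_eq e (g i)); ring.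
  exact/modp_small/(ltn_trans size_rho)/size_lcoef_row.
have monic_w : gam%:P * rho \is monic.
  by rewrite mul_polyC monicE lead_coefZ mulVf ?lead_coef_eq0.
have lind_w : lind w = p i.
  by rewrite (@lind_first_neq0 _ _ _ (pivot i) w_before) // w_pivot monic_neq0.
have := min_size w w_i lind_w; rewrite (lcoef_lind (j := pivot i) lind_w) w_pivot.
by rewrite leqNgt size_rho => /(_ monic_w).
Qed.

Lemma lcoef_row_dvd_f i : g i %| f.
Proof.
have c_i : chain C i (modrow f ((- (f %/ g i)) %% f *: r i)).
  by apply: chainZ; [rewrite ltn_modp f_neq0 | exact: chain_row].
have size_rem : (size (f %% g i)%R < size (g i))%N by rewrite ltn_modp lcoef_row_neq0.
have := lcoef_row_dvd_pivot c_i; rewrite modrowZ_row_pivot mulrC modp_mul.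
have -> : g i * - (f %/ g i) = f %% g i - f by rewrite {3}(divp_eq f (g i)); ring.
rewrite modpD modNp modpp oppr0 addr0 modp_small; last first.
  exact: ltn_trans size_rem (size_lcoef_row i).
move=> dvd_rem; apply/modp_eq0P/eqP; apply: contraLR dvd_rem => rem_neq0.
by apply/negP => /(dvdp_leq rem_neq0); rewrite leqNgt size_rem.
Qed.

Lemma chain_tail_comb j c : chain C j c -> exists a : 'I_k -> {poly F},
  (forall t, (size (a t) < size f)%N) /\ c = modrow f (\sum_(t < k | (j <= t)%N) a t *: r t).
Proof.
move eq_d : (k - j)%N => d; elim: d j eq_d c => [|d IH] j eq_d c c_j.
  exists (fun=> 0); split=> [t|]; first by rewrite size_poly0 size_f_gt0.
  rewrite big1 ?modrow0 => [|t]; last by rewrite scale0r.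
  by apply: basis.2; apply: chain_le c_j; rewrite -subn_eq0 eq_d.
have lt_jk : (j < k)%N by rewrite -subn_gt0 eq_d.
pose J := Ordinal lt_jk; pose q := c ord0 (pivot J) %/ g J.
pose c' := c + modrow f ((- q) %% f *: r J).
have c'_j : chain C j.+1 c'.
  apply: (chainS_of_pivot_eq0 (i := J)).
    by apply: chainD c_j (chainZ _ (chain_row J)); rewrite ltn_modp f_neq0.
  rewrite mxE modrowZ_row_pivot [_ * g J]mulrC modp_mul mulrN modNp mulrC divpK.
    case: C_code => reduced_C _ _ _; rewrite modp_small ?subrr //.
    exact: reduced_C _ (chain_code c_j) (pivot J).
  exact: lcoef_row_dvd_pivot.
have [|a [small_a c'_eq]] := IH j.+1 _ c' c'_j; first by rewrite subnS eq_d.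
exists (fun t => if t == J then q %% f else a t).
split=> [t|]; first by case: eqP => _; rewrite ?ltn_modp ?f_neq0.
rewrite (bigD1 J) //= eqxx modrowD modrowZ_modp.
have -> : \sum_(t < k | (j <= t)%N && (t != J)) (if t == J then q %% f else a t) *: r t
    = \sum_(t < k | (j < t)%N) a t *: r t.
  apply: eq_big => [t|t /andP[_ /negPf ->] //].
  by rewrite ltn_neqAle andbC -val_eqE eq_sym.
by rewrite -c'_eq /c' modrowZ_modp scaleNr modrowN addrCA subrr addr0.
Qed.

Lemma tail_comb_of_basis i : exists a : 'I_k -> {poly F},
  (forall j, (size (a j) < size f)%N) /\
  modrow f ((f %/ g i) *: r i) = modrow f (\sum_(j < k | (i < j)%N) a j *: r j).
Proof.
have c_i : chain C i.+1 (modrow f ((f %/ g i) %% f *: r i)).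
  apply: chainS_of_pivot_eq0; first by apply: chainZ (chain_row i); rewrite ltn_modp f_neq0.
  by rewrite modrowZ_row_pivot [_ * g i]mulrC modp_mul mulrC divpK ?modpp ?lcoef_row_dvd_f.
by have [a [small_a c_eq]] := chain_tail_comb c_i; exists a; rewrite -modrowZ_modp.
Qed.

End Basis.
End Code.

Theorem mainTheorem1 (F : finFieldType) (f : {poly F}) (l k : nat)
  (C : vec F l -> Prop) (G : 'M[{poly F}]_(k, l)) :
  f \is monic ->
  isACode f C ->
  isGenMatrix f G C ->
  (forall i : 'I_k, monicv (row i G)) ->
  let m := (size f).-1 in
  let condI := forall i j : 'I_k, (i < j)%N -> (lind (row i G) < lind (row j G))%N in
  let condII := forall i : 'I_k, lcoef (row i G) %| f in
  let condIII := forall i : 'I_k,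
      exists a : 'I_k -> {poly F},
        (forall j, (size (a j) < size f)%N) /\
        modrow f ((f %/ lcoef (row i G)) *: row i G) =
        modrow f (\sum_(j < k | (i < j)%N) a j *: row j G) in
  let condIII' := dimF C (\sum_(i < k) (m - (size (lcoef (row i G))).-1))%N in
  (basisOfDivisors C (fun i : 'I_k => row i G) <-> [/\ condI, condII & condIII]) /\
  (basisOfDivisors C (fun i : 'I_k => row i G) <-> [/\ condI, condII & condIII']).
Proof.
move=> f_monic C_code G_gen row_monic m condI condII condIII condIII'.
have basis_spanning := basis_of_reduced_spanning f_monic G_gen row_monic.
have spanning_divisors := reduced_spanning_of_divisors f_monic G_gen row_monic.
have basis_conds (basis : basisOfDivisors C (fun i => row i G)) :
    [/\ condI, condII & condIII].
  split.
  - exact: echelon_of_basis basis.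
  - exact: lcoef_row_dvd_f f_monic C_code G_gen row_monic basis.
  - exact: tail_comb_of_basis f_monic C_code G_gen row_monic basis.
split; split.
- exact: basis_conds.
- by case=> echelon divisors tail; exact/basis_spanning/spanning_divisors.
- move=> /basis_conds[echelon divisors tail].
  by split=> //; apply/dimF_of_reduced_spanning/spanning_divisors.
- by case=> echelon _ dim; exact/basis_spanning/reduced_spanning_of_dimF.
Qed.
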